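(* Let $F=\{f_i\}_{i=1}^N$ be a uniform Parseval frame for an $n$-dimensional Hilbert space $\mathcal{H}_n$, and let $p>1$. Then $\mathrm{AE}_{\mathcal{N}}^{(1),p}(F)=\frac nN$, and the canonical dual $S_F^{-1}F$ is the unique $1$-erasure numerically optimal dual of $F$, i.e. $\zeta_{\mathcal{N}}^{(1),p}(F)=\{S_F^{-1}F\}$.
   Context: A uniform Parseval frame is a frame $\{f_i\}$ with $\sum_i|\langle f,f_i\rangle|^2=\|f\|^2$ for all $f$ and all $\|f_i\|$ equal; then $S_F=I$ and $S_F^{-1}F=F$. $G=\{g_i\}_{i=1}^N$ is a dual of $F$ if $f=\sum_i\langle f,f_i\rangle g_i$ for all $f$. The numerical radius of an operator $T$ is $\omega(T)=\sup\{|\langle Tf,f\rangle|:\|f\|=1\}$. With $T_F f=(\langle f,f_i\rangle)_i$ the analysis operator and $\mathcal{D}^{(1)}$ the $N\times N$ diagonal matrices with exactly one diagonal entry $1$ and the rest $0$, define $\mathrm{AE}_{\mathcal{N}}^{(1),p}(F,G)=\{\frac1N\sum_{D\in\mathcal{D}^{(1)}}\omega(T_G^*DT_F)^p\}^{1/p}$; here $T_G^*DT_F$ is the operator $f\mapsto\langle f,f_i\rangle g_i$, whose numerical radius is $\frac{|\langle f_i,g_i\rangle|+\|f_i\|\|g_i\|}{2}$. $\mathrm{AE}_{\mathcal{N}}^{(1),p}(F)$ is the infimum of $\mathrm{AE}_{\mathcal{N}}^{(1),p}(F,G)$ over all duals $G$, and $\zeta_{\mathcal{N}}^{(1),p}(F)$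 is the set of duals attaining it. *)

(* Hilbert space H_n := 'cV[R[i]]_n
   (complex column vectors) with the standard inner product, R : realType. *)
From HB Require Import structures.
From mathcomp Require Import all_boot all_order all_algebra.
From mathcomp Require Import complex.
From mathcomp Require Import all_classical all_reals exp.
Set Implicit Arguments. Unset Strict Implicit. Unset Printing Implicit Defensive.
Import Order.TTheory GRing.Theory Num.Theory.
Local Open Scope ring_scope.
Local Open Scope classical_set_scope.

Section FrameDefs.
Variable R : realType.
Local Notation C := R[i].

Definition inner (n : nat) (x y : 'cV[C]_n) : C :=
  \sum_(k < n) x k 0 * conjc (y k 0).

Definition vnorm (n : nat) (x : 'cV[C]_n) : R :=
  Num.sqrt (\sum_(k < n) Normc.normc (x k 0) ^+ 2).

Definition adjmx (m n : nat) (A : 'M[C]_(m, n)) : 'M[C]_(n, m) :=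
  \matrix_(i, j) conjc (A j i).

Variables n N : nat.

Definition parseval_frame (F : 'I_N -> 'cV[C]_n) : Prop :=
  forall f : 'cV[C]_n, \sum_(i < N) Normc.normc (inner f (F i)) ^+ 2 = vnorm f ^+ 2.

Definition uniform_norm (F : 'I_N -> 'cV[C]_n) : Prop :=
  forall i j, vnorm (F i) = vnorm (F j).

Definition uniform_parseval_frame (F : 'I_N -> 'cV[C]_n) : Prop :=
  parseval_frame F /\ uniform_norm F.

Definition is_dual (F G : 'I_N -> 'cV[C]_n) : Prop :=
  forall f : 'cV[C]_n, f = \sum_(i < N) inner f (F i) *: G i.

(* analysis operator T_F f = (<f, f_i>)_i, as an N x n matrix *)
Definition analysis_op (F : 'I_N -> 'cV[C]_n) : 'M[C]_(N, n) :=
  \matrix_(i, k) conjc (F i k 0).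

Definition frame_op (F : 'I_N -> 'cV[C]_n) : 'M[C]_n :=
  adjmx (analysis_op F) *m analysis_op F.

Definition canonical_dual (F : 'I_N -> 'cV[C]_n) : 'I_N -> 'cV[C]_n :=
  fun i => invmx (frame_op F) *m F i.

Definition numrad (T : 'M[C]_n) : R :=
  sup [set Normc.normc (inner (T *m f) f) | f in [set f : 'cV[C]_n | vnorm f = 1]].

(* D^(1) = { delta_mx j j : j < N } (one diagonal entry 1, rest 0) *)
Definition AE1p (p : R) (F G : 'I_N -> 'cV[C]_n) : R :=
  powR ((N%:R)^-1 *
        \sum_(j < N) powR (numrad (adjmx (analysis_op G) *m delta_mx j j
                                   *m analysis_op F)) p) p^-1.

Definition AE1p_opt (p : R) (F : 'I_N -> 'cV[C]_n) : R :=
  inf [set AE1p p F G | G in [set G | is_dual F G]].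

Definition zeta1p (p : R) (F : 'I_N -> 'cV[C]_n) : set ('I_N -> 'cV[C]_n) :=
  [set G | is_dual F G /\ AE1p p F G = AE1p_opt p F].

End FrameDefs.

From mathcomp Require Import all_boot all_order all_algebra.
From mathcomp Require Import complex.
From mathcomp Require Import all_classical all_reals exp.
From mathcomp Require Import ring lra sequences.
Import Order.TTheory GRing.Theory Num.Theory.
Set Implicit Arguments. Unset Strict Implicit. Unset Printing Implicit Defensive.
Local Open Scope ring_scope.
Local Open Scope classical_set_scope.

(** For a dual [G] of [F], the operator [T_G^* D_j T_F] is the rank-one map
[f |-> <f, f_j> g_j], whose numerical radius dominates [|<g_j, f_j>|] and hence
[Re <g_j, f_j>]; as [sum_j <g_j, f_j> = tr (T_G^* T_F) = n], these radii sum to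
at least [n].  By the tangent-line inequality for [x |-> x^p], [p > 1], their
[p]-mean is then at least [n/N], with equality only if every radius and every
[Re <g_j, f_j>] equals [n/N = ||f_j||^2].  A Parseval frame is its own canonical
dual and attains the bound, since [omega (f f^* ) = ||f||^2].  Conversely, if
[omega (g f^* ) <= ||f||^2 = Re <g, f>], testing the numerical radius on [f + g]
gives [||g||^2 <= ||f||^2], so [||g - f||^2 = ||g||^2 - ||f||^2 <= 0]. *)

Lemma inf_attained (R : realType) (E : set R) x : E x -> lbound E x -> inf E = x.
Proof.
move=> Ex lbx; apply/eqP; rewrite eq_le lb_le_inf ?andbT //; last by exists x.
by apply: ge_inf => //; exists x.
Qed.

Section InnerProduct.
Local Open Scope complex_scope.
Variable R : realType.
Local Notation C := R[i].
Local Notation normc := Normc.normc.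

Lemma normC_normc (z : C) : `|z| = (normc z)%:C. Proof. by []. Qed.

Lemma normc_ge0 (z : C) : 0 <= normc z.
Proof. by rewrite -ler0c -normC_normc normr_ge0. Qed.

Lemma normc_real (x : R) : normc x%:C = `|x|.
Proof. by rewrite /Normc.normc /= expr0n /= addr0 sqrtr_sqr. Qed.

Lemma sqr_normc_real (z : C) : (normc z ^+ 2)%:C = z * conjc z.
Proof. by rewrite (rmorphXn (real_complex R)) -sqr_normc. Qed.

Lemma adjmxE m k (A : 'M[C]_(m, k)) : adjmx A = (map_mx conjc A)^T.
Proof. by apply/matrixP => i j; rewrite !mxE. Qed.

Lemma adjmx_mul m k l (A : 'M[C]_(m, k)) (B : 'M[C]_(k, l)) :
  adjmx (A *m B) = adjmx B *m adjmx A.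
Proof. by rewrite !adjmxE map_mxM trmx_mul. Qed.

Lemma innerE m (x y : 'cV[C]_m) : inner x y = (adjmx y *m x) 0 0.
Proof. by rewrite /inner mxE; apply: eq_bigr => k _; rewrite mxE mulrC. Qed.

Lemma inner_adjmx m k (A : 'M[C]_(m, k)) x y : inner (adjmx A *m x) y = inner x (A *m y).
Proof. by rewrite !innerE mulmxA -adjmx_mul. Qed.

Variable n : nat.
Implicit Types x y z : 'cV[C]_n.

Lemma innerDl x y z : inner (x + y) z = inner x z + inner y z.
Proof. by rewrite !innerE mulmxDr mxE. Qed.

Lemma innerZl a x y : inner (a *: x) y = a * inner x y.
Proof. by rewrite !innerE -scalemxAr mxE. Qed.

Lemma innerC x y : inner y x = conjc (inner x y).
Proof.
by rewrite /inner rmorph_sum; apply: eq_bigr => k _; rewrite rmorphM /= conjcK mulrC.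
Qed.

Lemma innerDr x y z : inner x (y + z) = inner x y + inner x z.
Proof. by rewrite innerC innerDl rmorphD /= -!innerC. Qed.

Lemma innerZr x a y : inner x (a *: y) = conjc a * inner x y.
Proof. by rewrite innerC innerZl rmorphM /= -innerC. Qed.

Lemma innerNl x y : inner (- x) y = - inner x y.
Proof. by rewrite -scaleN1r innerZl mulN1r. Qed.

Lemma innerBl x y z : inner (x - y) z = inner x z - inner y z.
Proof. by rewrite innerDl innerNl. Qed.

Lemma innerBr x y z : inner x (y - z) = inner x y - inner x z.
Proof. by rewrite innerC innerBl rmorphB /= -!innerC. Qed.

Lemma inner0l y : inner 0 y = 0.
Proof. by rewrite -(scale0r (0 : 'cV[C]_n)) innerZl mul0r. Qed.

Lemma inner0r x : inner x 0 = 0.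
Proof. by rewrite innerC inner0l conjc0. Qed.

Lemma vnorm_ge0 x : 0 <= vnorm x.
Proof. exact: sqrtr_ge0. Qed.

Lemma sqr_vnorm x : vnorm x ^+ 2 = \sum_(k < n) normc (x k 0) ^+ 2.
Proof. by rewrite sqr_sqrtr // sumr_ge0 // => k _; rewrite sqr_ge0. Qed.

Lemma inner_self x : inner x x = (vnorm x ^+ 2)%:C.
Proof.
rewrite sqr_vnorm (rmorph_sum (real_complex R)).
by apply: eq_bigr => k _; rewrite -sqr_normc_real.
Qed.

Lemma normc_inner_self x : normc (inner x x) = vnorm x ^+ 2.
Proof. by rewrite inner_self normc_real ger0_norm // sqr_ge0. Qed.

Lemma vnorm_eq0 x : (vnorm x == 0) = (x == 0).
Proof.
apply/idP/eqP => [|->]; last first.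
  by rewrite /vnorm big1 ?sqrtr0 // => k _; rewrite mxE Normc.normc0 expr0n.
rewrite -sqrf_eq0 sqr_vnorm psumr_eq0 => [/allP x0|k _]; last exact: sqr_ge0.
apply/matrixP => k l; rewrite (ord1 l) mxE.
by apply: Normc.eq0_normc; apply/eqP; rewrite -sqrf_eq0; apply: x0; rewrite mem_index_enum.
Qed.

Lemma vnorm_gt0 x : (0 < vnorm x) = (x != 0).
Proof. by rewrite lt_def vnorm_eq0 vnorm_ge0 andbT. Qed.

Lemma vnormZ a x : vnorm (a *: x) = normc a * vnorm x.
Proof.
rewrite /vnorm -[normc a]ger0_norm ?normc_ge0 // -sqrtr_sqr -sqrtrM ?sqr_ge0 //.
by rewrite mulr_sumr; congr Num.sqrt; apply: eq_bigr => k _; rewrite mxE Normc.normcM exprMn.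
Qed.

Lemma normc_inner_le x y : normc (inner x y) <= vnorm x * vnorm y.
Proof.
have [->|y0] := eqVneq y 0; first by rewrite inner0r Normc.normc0 mulr_ge0 ?vnorm_ge0.
set w := inner x y; set Y := vnorm y ^+ 2.
have Y_gt0 : 0 < Y by rewrite exprn_gt0 // vnorm_gt0.
have YC : Y%:C != 0 by rewrite gt_eqF // ltcR.
set v := x - (w / Y%:C) *: y.
have vy : inner v y = 0.
  by rewrite innerBl innerZl inner_self divfK ?subrr.
have vv : (vnorm v ^+ 2)%:C = (vnorm x ^+ 2 - normc w ^+ 2 / Y)%:C.
  rewrite -inner_self {2}/v innerBr innerZr vy mulr0 subr0.
  rewrite /v innerBl innerZl inner_self (innerC x y) -/w.
  by rewrite rmorphB (rmorphM _ (normc w ^+ 2)) fmorphV /= sqr_normc_real mulrAC.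
have : normc w ^+ 2 / Y <= vnorm x ^+ 2.
  by rewrite -subr_ge0 -(complexI vv) sqr_ge0.
rewrite ler_pdivrMr // -exprMn.
by rewrite (ler_pXn2r (isT : (0 < 2)%N)) ?nnegrE ?normc_ge0 ?mulr_ge0 ?vnorm_ge0.
Qed.

Lemma inner_delta x k : inner x (delta_mx k 0) = x k 0.
Proof.
rewrite /inner (bigD1 k) //= big1 => [|l /negbTE lk]; rewrite mxE ?lk ?conjc0 ?mulr0 //.
by rewrite !eqxx conjc1 mulr1 addr0.
Qed.

Lemma conjc_i : conjc ('i : C) = - 'i.
Proof. by apply/eqP; rewrite eq_complex /= oppr0 !eqxx. Qed.

Lemma mx_eq0_inner (A : 'M[C]_n) : (forall f, inner (A *m f) f = 0) -> A = 0.
Proof.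
move=> A0; apply/matrixP => k l; rewrite mxE.
have entry i j : inner (A *m delta_mx j 0) (delta_mx i 0) = A i j.
  by rewrite inner_delta -colE mxE.
have polar c : conjc c * A l k + c * A k l = 0.
  rewrite -(A0 (delta_mx k 0 + c *: delta_mx l 0)) mulmxDr -scalemxAr.
  rewrite !(innerDl, innerDr, innerZl, innerZr) !A0 !entry.
  by rewrite !mulr0 add0r addr0.
have /eqP := polar 1; rewrite conjc1 !mul1r addr_eq0 => /eqP Alk.
have /eqP := polar 'i; rewrite conjc_i Alk mulrN mulNr opprK -mulr2n mulrn_eq0 /=.
by rewrite mulf_eq0 eq_complex /= oner_eq0 andbF => /eqP.
Qed.

End InnerProduct.

Section NumericalRadius.
Local Open Scope complex_scope.
Variable R : realType.
Local Notation C := R[i].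
Local Notation normc := Normc.normc.

Lemma Re_le_normc (z : C) : complex.Re z <= normc z.
Proof. by rewrite -lecR complexRe; apply: (leif_Re_Creal z).1. Qed.

Lemma normc_le_Re (z : C) : normc z <= complex.Re z -> z = (complex.Re z)%:C.
Proof.
move=> le_nRe; have : 'Re z == `|z|.
  by rewrite eq_le -complexRe normC_normc !lecR Re_le_normc.
by rewrite (leif_Re_Creal z) => /ger0_real/RRe_real.
Qed.

Variable n : nat.
Implicit Types (T : 'M[C]_n) (a b f : 'cV[C]_n).

Lemma numrad_ge0 T : 0 <= numrad T.
Proof.
rewrite /numrad; set E := [set _ | _ in _].
have [[[_ [f f1 _]] ubE]|supE] := pselect (has_sup E); last by rewrite (sup_out supE).
by apply: le_trans (normc_ge0 (inner (T *m f) f)) (ub_le_sup ubE _); exists f.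
Qed.

Lemma numrad_le T M : 0 <= M ->
  (forall f, vnorm f = 1 -> normc (inner (T *m f) f) <= M) -> numrad T <= M.
Proof.
move=> M_ge0 le_M; rewrite /numrad; set E := [set _ | _ in _].
have [->|/set0P E_neq0] := eqVneq E set0; first by rewrite sup0.
by apply: ge_sup => // _ [f f1 <-]; apply: le_M.
Qed.

Lemma rank1_mulmx a b f : b *m adjmx a *m f = inner f a *: b.
Proof. by rewrite -mulmxA [adjmx a *m f]mx11_scalar -innerE mul_mx_scalar. Qed.

Lemma inner_rank1 a b f : inner (b *m adjmx a *m f) f = inner f a * inner b f.
Proof. by rewrite rank1_mulmx innerZl. Qed.

Lemma normc_rank1_le a b f : vnorm f = 1 ->
  normc (inner f a * inner b f) <= vnorm a * vnorm b.
Proof.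
move=> f1; rewrite Normc.normcM; apply: ler_pM; rewrite ?normc_ge0 //.
  by have := normc_inner_le f a; rewrite f1 mul1r.
by have := normc_inner_le b f; rewrite f1 mulr1.
Qed.

Lemma numrad_rank1_ge a b f : vnorm f = 1 ->
  normc (inner f a * inner b f) <= numrad (b *m adjmx a).
Proof.
move=> f1; rewrite -inner_rank1; apply: ub_le_sup; last by exists f.
by exists (vnorm a * vnorm b) => _ [g g1 <-]; rewrite inner_rank1 normc_rank1_le.
Qed.

Lemma numrad_rank1_scale a b f :
  normc (inner f a * inner b f) <= numrad (b *m adjmx a) * vnorm f ^+ 2.
Proof.
have [->|f0] := eqVneq f 0.
  by rewrite inner0l mul0r Normc.normc0 mulr_ge0 ?numrad_ge0 ?sqr_ge0.
have r_gt0 : 0 < vnorm f by rewrite vnorm_gt0.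
have u1 : vnorm ((vnorm f)^-1%:C *: f) = 1.
  by rewrite vnormZ normc_real ger0_norm ?invr_ge0 ?vnorm_ge0 // mulVf // gt_eqF.
have := numrad_rank1_ge a b u1.
rewrite innerZl innerZr conjc_real mulrACA -rmorphM Normc.normcM normc_real.
rewrite ger0_norm; last by rewrite mulr_ge0 // invr_ge0 ltW.
by rewrite -invfM -expr2 mulrC ler_pdivrMr // exprn_gt0.
Qed.

Lemma numrad_rank1_ge_inner a b : normc (inner b a) <= numrad (b *m adjmx a).
Proof.
have [->|a0] := eqVneq a 0; first by rewrite inner0r Normc.normc0 numrad_ge0.
have := numrad_rank1_scale a b a; rewrite Normc.normcM normc_inner_self mulrC.
by rewrite ler_pM2r // exprn_gt0 // vnorm_gt0.
Qed.

Lemma numrad_rank1_ge_Re a b : complex.Re (inner b a) <= numrad (b *m adjmx a).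
Proof. exact: le_trans (Re_le_normc _) (numrad_rank1_ge_inner a b). Qed.

Lemma numrad_rank1_self a : numrad (a *m adjmx a) = vnorm a ^+ 2.
Proof.
apply/eqP; rewrite eq_le -{2}normc_inner_self numrad_rank1_ge_inner andbT.
by apply: numrad_le => [|f f1]; rewrite ?sqr_ge0 // inner_rank1 expr2 normc_rank1_le.
Qed.

Lemma numrad_rank1_unique a b : a != 0 ->
  complex.Re (inner b a) = vnorm a ^+ 2 -> numrad (b *m adjmx a) <= vnorm a ^+ 2 ->
  b = a.
Proof.
move=> a0 Re_ba le_nr.
have A_gt0 : 0 < vnorm a ^+ 2 by rewrite exprn_gt0 // vnorm_gt0.
have ba : inner b a = (vnorm a ^+ 2)%:C.
  rewrite -Re_ba; apply: normc_le_Re.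
  by rewrite Re_ba (le_trans (numrad_rank1_ge_inner a b)).
have ab : inner a b = (vnorm a ^+ 2)%:C by rewrite innerC ba conjc_real.
have normDab : vnorm (a + b) ^+ 2 = 3 * vnorm a ^+ 2 + vnorm b ^+ 2.
  apply: complexI; rewrite -inner_self !(innerDl, innerDr) !inner_self ab ba.
  move: (vnorm a ^+ 2) (vnorm b ^+ 2) => A B.
  by rewrite !rmorphD rmorphM rmorph_nat; ring.
have normBba : vnorm (b - a) ^+ 2 = vnorm b ^+ 2 - vnorm a ^+ 2.
  apply: complexI; rewrite -inner_self !(innerBl, innerBr) !inner_self ab ba.
  move: (vnorm a ^+ 2) (vnorm b ^+ 2) => A B.
  by rewrite rmorphB; ring.
have le_Dab := numrad_rank1_scale a b (a + b).
rewrite normDab !(innerDl, innerDr) !inner_self ba -!rmorphD -rmorphM normc_real in le_Dab.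
have B_le_A : vnorm b ^+ 2 <= vnorm a ^+ 2.
  have S_ge0 : 0 <= 3 * vnorm a ^+ 2 + vnorm b ^+ 2.
    by rewrite addr_ge0 ?sqr_ge0 // mulr_ge0 ?sqr_ge0.
  have := le_trans le_Dab (ler_wpM2r S_ge0 le_nr).
  rewrite ger0_norm; last by rewrite mulr_ge0 ?addr_ge0 ?sqr_ge0.
  move: A_gt0 (sqr_ge0 (vnorm b)); move: (vnorm a ^+ 2) (vnorm b ^+ 2) => A B; nra.
have : vnorm (b - a) ^+ 2 == 0 by rewrite eq_le sqr_ge0 normBba subr_le0 B_le_A.
by rewrite sqrf_eq0 vnorm_eq0 subr_eq0 => /eqP.
Qed.

End NumericalRadius.

Section PowerMean.
Variables (R : realType) (p : R).
Hypothesis p_gt1 : 1 < p.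

Let p_gt0 : 0 < p. Proof. exact: lt_trans ltr01 p_gt1. Qed.

Lemma powR_Bernoulli_leif (y : R) : 0 <= y ->
  1 + p * (y - 1) <= powR y p ?= iff (y == 1).
Proof.
move=> y_ge0; apply/leifP; have [->|y_neq1] := eqVneq y 1.
  by rewrite powR1 subrr mulr0 addr0.
have [->|y_neq0] := eqVneq y 0.
  by rewrite powR0 ?gt_eqF // sub0r mulrN1 subr_lt0.
have y_gt0 : 0 < y by rewrite lt_def y_neq0.
(* [y^p = y e^((p-1) ln y) > y (1 + (p-1) ln y) >= y + (p-1)(y-1)], the last
   step because [ln y >= 1 - 1/y]. *)
rewrite -mulr_powRB1 // /powR (negbTE y_neq0).
have ln_neq0 : ln y != 0 by rewrite ln_eq0.
have lt_exp : 1 + (p - 1) * ln y < expR ((p - 1) * ln y).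
  by apply: expR_gt1Dx; rewrite mulf_neq0 // subr_eq0 gt_eqF.
have le_ln : y - 1 <= y * ln y.
  have := expR_ge1Dx (- ln y); rewrite expRN lnK ?posrE // => le_inv.
  by have := ler_wpM2l (ltW y_gt0) le_inv; rewrite mulfV ?gt_eqF //; lra.
have le_lin : y + (p - 1) * (y - 1) <= y * (1 + (p - 1) * ln y).
  by rewrite [in X in _ <= X]mulrDr mulr1 lerD2l mulrCA ler_wpM2l // subr_ge0 ltW.
apply: le_lt_trans (le_trans _ le_lin) _; first lra.
by rewrite ltr_pM2l.
Qed.

Lemma powR_tangent_leif (x c : R) : 0 <= x -> 0 <= c ->
  powR c p + p * powR c (p - 1) * (x - c) <= powR x p ?= iff (x == c).
Proof.
move=> x_ge0 c_ge0; have [->|c_neq0] := eqVneq c 0.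
  have pB1_neq0 : p - 1 != 0 by rewrite subr_eq0 gt_eqF.
  rewrite !powR0 ?(gt_eqF p_gt0) // mulr0 mul0r add0r.
  apply/leifP; have [->|x_neq0] := eqVneq x 0; first by rewrite powR0 ?(gt_eqF p_gt0).
  by rewrite powR_gt0 // lt_def x_neq0.
have c_gt0 : 0 < c by rewrite lt_def c_neq0.
have cp_gt0 : 0 < powR c p by rewrite powR_gt0.
have -> : powR c p + p * powR c (p - 1) * (x - c) = powR c p * (1 + p * (x / c - 1)).
  by rewrite -(mulr_powRB1 c_ge0 p_gt0); field; rewrite gt_eqF.
have -> : powR x p = powR c p * powR (x / c) p.
  by rewrite -powRM ?divr_ge0 // mulrC divfK ?gt_eqF.
have -> : (x == c) = (x / c == 1).
  by apply/eqP/eqP => [->|/(congr1 ( *%R^~ c))]; rewrite ?divff ?divfK ?mul1r.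
by rewrite (mono_leif (ler_pM2l cp_gt0)); apply: powR_Bernoulli_leif; rewrite divr_ge0.
Qed.

Definition pmean N (a : 'I_N -> R) := powR (N%:R^-1 * \sum_j powR (a j) p) p^-1.

Variable N : nat.
Implicit Types (a : 'I_N -> R) (c : R).

Lemma sum_powR_leif a c : (forall j, 0 <= a j) -> 0 <= c ->
    N%:R * c <= \sum_j a j ->
  N%:R * powR c p <= \sum_j powR (a j) p ?= iff [forall j, a j == c].
Proof.
move=> a_ge0 c_ge0 le_c.
have tangent := leif_sum (fun j (_ : true) => powR_tangent_leif (a_ge0 j) c_ge0).
have le_tangent : N%:R * powR c p <=
    \sum_j (powR c p + p * powR c (p - 1) * (a j - c)).
  rewrite big_split /= sumr_const card_ord mulr_natl lerDl -mulr_sumr.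
  apply: mulr_ge0; first by rewrite mulr_ge0 ?powR_ge0 // ltW.
  by rewrite sumrB sumr_const card_ord subr_ge0 -mulr_natl.
apply/leifP; case: ifPn => [/forallP a_c|not_a_c].
  rewrite (eq_bigr (fun=> powR c p)) => [|j _]; last by rewrite (eqP (a_c j)).
  by rewrite sumr_const card_ord mulr_natl.
by apply: le_lt_trans le_tangent _; rewrite (lt_leif tangent).
Qed.

Hypothesis N_gt0 : (0 < N)%N.

Lemma pmean_const c : 0 <= c -> pmean (fun _ : 'I_N => c) = c.
Proof.
move=> c_ge0; rewrite /pmean sumr_const card_ord -[powR c p *+ N]mulr_natl.
rewrite mulKf ?pnatr_eq0 -?lt0n //.
by rewrite -powRrM mulfV ?gt_eqF // powRr1.
Qed.

Lemma pmean_leif a c : (forall j, 0 <= a j) -> 0 <= c ->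
  N%:R * c <= \sum_j a j -> c <= pmean a ?= iff [forall j, a j == c].
Proof.
move=> a_ge0 c_ge0 le_c; have N_gt0' : 0 < N%:R :> R by rewrite ltr0n.
have := sum_powR_leif a_ge0 c_ge0 le_c.
rewrite -(mono_leif (ler_pM2l (_ : 0 < N%:R^-1))) ?invr_gt0 // mulKf ?gt_eqF //.
have pV_gt0 : 0 < p^-1 by rewrite invr_gt0.
have powRV_mono := le_mono_in (gt0_ltr_powR pV_gt0).
rewrite -(mono_in_leif powRV_mono) ?nnegrE ?powR_ge0 ?mulr_ge0 ?invr_ge0 ?sumr_ge0 //.
  by rewrite -powRrM mulfV ?gt_eqF // powRr1.
by move=> j _; rewrite powR_ge0.
Qed.

End PowerMean.

Section Frames.
Variables (R : realType) (n N : nat).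
Local Notation C := R[i].
Local Notation normc := Normc.normc.
Implicit Types F G : 'I_N -> 'cV[C]_n.

Lemma row_analysis_op F j : row j (analysis_op F) = adjmx (F j).
Proof. by apply/matrixP => i k; rewrite !mxE (ord1 i). Qed.

Lemma col_adj_analysis_op G j : col j (adjmx (analysis_op G)) = G j.
Proof. by apply/matrixP => k i; rewrite !mxE conjcK (ord1 i). Qed.

Lemma analysis_delta_rank1 F G j :
  adjmx (analysis_op G) *m delta_mx j j *m analysis_op F = G j *m adjmx (F j).
Proof.
rewrite -(mul_delta_mx (0 : 'I_1)) mulmxA -colE -mulmxA -rowE.
by rewrite col_adj_analysis_op row_analysis_op.
Qed.

Lemma AE1pE (p : R) F G : AE1p p F G = pmean p (fun j => numrad (G j *m adjmx (F j))).
Proof.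
rewrite /AE1p (eq_bigr (fun j => powR (numrad (G j *m adjmx (F j))) p)) => [//|j _].
by rewrite analysis_delta_rank1.
Qed.

Lemma analysis_opE F f : analysis_op F *m f = \col_i inner f (F i).
Proof.
apply/matrixP => i k; rewrite !mxE (ord1 k) /inner.
by apply: eq_bigr => l _; rewrite mxE mulrC.
Qed.

Lemma mul_adj_analysis F G f :
  adjmx (analysis_op G) *m analysis_op F *m f = \sum_i inner f (F i) *: G i.
Proof.
rewrite -mulmxA analysis_opE; apply/matrixP => k l; rewrite (ord1 l) !mxE summxE.
by apply: eq_bigr => i _; rewrite !mxE conjcK mulrC.
Qed.

Lemma is_dualP F G : is_dual F G <-> adjmx (analysis_op G) *m analysis_op F = 1%:M.
Proof.
split=> [dFG|id_mx f]; last by rewrite -mul_adj_analysis id_mx mul1mx.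
apply/matrixP => k l; have := congr1 (fun v : 'cV[C]_n => v k 0) (dFG (delta_mx l 0)).
by rewrite -mul_adj_analysis -colE !mxE eqxx andbT => ->.
Qed.

Lemma mxtrace_adj_analysis F G :
  \tr (adjmx (analysis_op G) *m analysis_op F) = \sum_i inner (G i) (F i).
Proof.
rewrite /mxtrace; under eq_bigr do rewrite mxE.
by rewrite exchange_big; apply: eq_bigr => i _; apply: eq_bigr => k _; rewrite !mxE conjcK.
Qed.

Lemma dual_trace F G : is_dual F G -> \sum_i inner (G i) (F i) = n%:R.
Proof. by move/is_dualP; rewrite -mxtrace_adj_analysis => ->; rewrite mxtrace1. Qed.

Lemma sqr_vnorm_analysis F f :
  vnorm (analysis_op F *m f) ^+ 2 = \sum_i normc (inner f (F i)) ^+ 2.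
Proof. by rewrite sqr_vnorm analysis_opE; under eq_bigr do rewrite mxE. Qed.

Lemma parseval_frame_op F : parseval_frame F -> frame_op F = 1%:M.
Proof.
move=> parF; apply/eqP; rewrite -subr_eq0; apply/eqP/mx_eq0_inner => f.
rewrite mulmxBl mul1mx innerBl /frame_op -mulmxA inner_adjmx !inner_self.
by rewrite sqr_vnorm_analysis parF subrr.
Qed.

Lemma parseval_dual F : parseval_frame F -> is_dual F F.
Proof. by move/parseval_frame_op/is_dualP. Qed.

Lemma canonical_dual_parseval F : parseval_frame F -> canonical_dual F = F.
Proof.
by move/parseval_frame_op => S1; apply/funext => j; rewrite /canonical_dual S1 invmx1 mul1mx.
Qed.

Lemma uniform_parseval_vnorm F j : (0 < N)%N -> uniform_parseval_frame F ->
  vnorm (F j) ^+ 2 = n%:R / N%:R.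
Proof.
move=> N_gt0 [parF unifF]; have := dual_trace (parseval_dual parF).
under eq_bigr do rewrite inner_self (unifF _ j).
rewrite sumr_const card_ord -rmorphMn -(rmorph_nat (real_complex R)) => /complexI <-.
by rewrite -[_ ^+ 2 *+ N]mulr_natr mulfK // pnatr_eq0 -lt0n.
Qed.

Lemma dual_sum_Re F G : is_dual F G -> \sum_j complex.Re (inner (G j) (F j)) = n%:R.
Proof.
move/dual_trace/(congr1 (@complex.Re R)).
by rewrite raddf_sum -(rmorph_nat (real_complex R)).
Qed.

Lemma dual_sum_numrad_ge F G : is_dual F G ->
  n%:R <= \sum_j numrad (G j *m adjmx (F j)).
Proof.
by move/dual_sum_Re <-; apply: ler_sum => j _; apply: numrad_rank1_ge_Re.
Qed.

End Frames.

Section Optimality.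
Variables (R : realType) (n N : nat) (F : 'I_N -> 'cV[R[i]]_n) (p : R).
Hypotheses (N_gt0 : (0 < N)%N) (p_gt1 : 1 < p) (unifF : uniform_parseval_frame F).

Let c : R := n%:R / N%:R.

Let c_ge0 : 0 <= c. Proof. by rewrite divr_ge0 ?ler0n. Qed.

Let Nc : N%:R * c = n%:R.
Proof. by rewrite mulrC divfK // pnatr_eq0 -lt0n. Qed.

Let normF j : vnorm (F j) ^+ 2 = c. Proof. exact: uniform_parseval_vnorm. Qed.

Lemma AE1p_self : AE1p p F F = c.
Proof.
rewrite AE1pE -[RHS](pmean_const p_gt1 N_gt0 c_ge0); congr pmean.
by apply/funext => j; rewrite numrad_rank1_self normF.
Qed.

Lemma AE1p_dual_leif G : is_dual F G ->
  c <= AE1p p F G ?= iff [forall j, numrad (G j *m adjmx (F j)) == c].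
Proof.
move=> dFG; rewrite AE1pE; apply: pmean_leif => // [j|]; first exact: numrad_ge0.
by rewrite Nc dual_sum_numrad_ge.
Qed.

Lemma AE1p_dual_eq G : is_dual F G -> AE1p p F G = c -> G = F.
Proof.
move=> dFG AEc; have := (AE1p_dual_leif dFG).2.
rewrite AEc eqxx => /esym/forallP numrad_c.
have Re_c j : complex.Re (inner (G j) (F j)) = c.
  have gap_ge0 i : 0 <= numrad (G i *m adjmx (F i)) - complex.Re (inner (G i) (F i)).
    by rewrite subr_ge0 numrad_rank1_ge_Re.
  have gap_sum : \sum_i (numrad (G i *m adjmx (F i)) - complex.Re (inner (G i) (F i))) = 0.
    rewrite sumrB dual_sum_Re // (eq_bigr (fun=> c)) => [|i _]; last exact/eqP.
    by rewrite sumr_const card_ord -[c *+ N]mulr_natl Nc subrr.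
  have gap0 := psumr_eq0P (fun i _ => gap_ge0 i) gap_sum.
  by apply/esym/eqP; rewrite -(eqP (numrad_c j)) -subr_eq0 gap0.
apply/funext => j; have [n0|n_gt0] := posnP n.
  by apply/matrixP => k; have : (k < 0)%N by rewrite -n0 ltn_ord.
apply: numrad_rank1_unique; rewrite ?normF ?Re_c ?(eqP (numrad_c j)) //.
by rewrite -vnorm_eq0 -sqrf_eq0 normF gt_eqF // divr_gt0 ?ltr0n.
Qed.

End Optimality.

Theorem proposition4p1 (R : realType) (n N : nat)
    (F : 'I_N -> 'cV[R[i]]_n) (p : R) :
  (0 < N)%N -> 1 < p -> uniform_parseval_frame F ->
  AE1p_opt p F = n%:R / N%:R /\ zeta1p p F = [set canonical_dual F].
Proof.
move=> N_gt0 p_gt1 unifF; have [parF _] := unifF.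
have opt : AE1p_opt p F = n%:R / N%:R.
  rewrite /AE1p_opt; apply: inf_attained.
    by exists F; [exact: parseval_dual | exact: AE1p_self].
  by move=> _ [G dFG <-]; apply: (AE1p_dual_leif N_gt0 p_gt1 dFG).1.
split=> //; rewrite canonical_dual_parseval //; apply/seteqP; split=> [G [dFG]|_ ->].
  by rewrite opt; apply: AE1p_dual_eq.
by split; [exact: parseval_dual | rewrite AE1p_self ?opt].
Qed.
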